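(* Fix an RWA-P instance (setting as in the context) and $\alpha,\beta>0$ with $\beta/\alpha>|R|(M-2)+2$, where $M=\max_{r\in R}\big(\max_{w\in W^r}B^r_w+\max_{p\in P^r}B^r_p\big)$. Let $B^r_{w_{\min}}=\min_{w\in W^r}B^r_w$ and $B^r_{p_{\min}}=\min_{p\in P^r}B^r_p$. If $$\rho>\beta(|R|+1)-\alpha\Big(1+\sum_{r\in R}\big(B^r_{w_{\min}}+B^r_{p_{\min}}\big)\Big),\qquad \rho>0,$$ then every minimizer over all binary vectors $(x,y)$ of $$Q(x,y)=f(x,y)+\rho\sum_{r}\Big(\sum_{w}x^r_w-\sum_{p}y^r_p\Big)^2+\rho\sum_r\Big(\sum_w x^r_w-1\Big)\Big(\sum_w x^r_w\Big)+\rho\!\!\sum_{(r,w,p)\in\mathcal C_1}\!\!x^r_wy^r_p+\rho\!\!\!\sum_{(r_1,r_2,w,p)\in\mathcal C_2}\!\!\!x^{r_1}_wy^{r_2}_p+\rho\!\!\!\sum_{(r_1,r_2,w_1,w_2)\in\mathcal C_3}\!\!\!x^{r_1}_{w_1}x^{r_2}_{w_2}+\rho\!\!\!\sum_{(r_1,r_2,p_1,p_2)\in\mathcal C_4}\!\!\!y^{r_1}_{p_1}y^{r_2}_{p_2}$$ is a feasible solution that minimizes $f$ over all feasible solutions.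
   Context: An RWA-P instance consists of: a directed graph $G=(V,E)$ (parallel arcs allowed) whose arcs are called links; a finite set $\Lambda$ of wavelengths; a finite set $R$ of requests, each with a source $s^r$ and distinct destination $t^r$; and for each $r$ nonempty finite sets $W^r$ (working) and $P^r$ (protection) of lightpaths, each lightpath $\ell$ being a directed $s^r$–$t^r$ path in $G$ with link set $E[\ell]$, length $B^r_\ell=|E[\ell]|\ge1$, and wavelength $\Lambda[\ell]\in\Lambda$. Conflict sets: $\mathcal C_1=\{(r,w,p): w\in W^r,p\in P^r, E[w]\cap E[p]\ne\emptyset\}$; $\mathcal C_2=\{(r_1,r_2,w,p): r_1\ne r_2, w\in W^{r_1}, p\in P^{r_2}, \Lambda[w]=\Lambda[p], E[w]\cap E[p]\ne\emptyset\}$; $\mathcal C_3=\{(r_1,r_2,w_1,w_2): w_i\in W^{r_i}, (r_1,w_1)\ne(r_2,w_2), \Lambda[w_1]=\Lambda[w_2], E[w_1]\cap E[w_2]\neq\emptyset\}$; $\mathcal C_4$ analogously for distinct protection lightpaths. A solution is binary $x=(x^r_w)$, $y=(y^r_p)$; feasible if for every $r$, $\sum_w x^r_w=\sum_p y^r_p$ and $\sum_w x^r_w\le1$, and for each tuple in $\mathcal C_1,\dots,\mathcal C_4$ the two corresponding variables sum to at most 1. $f(x,y)=\alpha\sum_r\big(\sum_wB^r_wx^r_w+\sum_pB^r_py^r_p\big)-\beta\sum_r\sum_w x^r_w$. *)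

From HB Require Import structures.
From mathcomp Require Import all_boot all_order all_algebra.
Set Implicit Arguments. Unset Strict Implicit. Unset Printing Implicit Defensive.
Import Order.TTheory GRing.Theory Num.Theory.

(* Data of an RWA-P instance.
   - [vert]/[link]: vertices and links (arcs) of the directed multigraph G;
     a link e goes from [ltail e] to [lhead e] (parallel arcs allowed).
   - [wavelength]: the finite set Lambda.
   - [request]: the finite set R; request r has source [src r], destination [dst r].
   - [wpath]: index set of all working-lightpath variables x^r_w, i.e. of the
     pairs (r, w) with w in W^r; [wreq w] is the request r, [wlinks w] is the
     lightpath as a sequence of links, [wlam w] its wavelength.  Thus
     W^r = [set w | wreq w == r].
   - [ppath], [preq], [plinks], [plam]: the same for protection lightpaths. *)
Record rwap := RWAP {
  vert : finType;
  link : finType;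
  ltail : link -> vert;
  lhead : link -> vert;
  wavelength : finType;
  request : finType;
  src : request -> vert;
  dst : request -> vert;
  wpath : finType;
  ppath : finType;
  wreq : wpath -> request;
  preq : ppath -> request;
  wlinks : wpath -> seq link;
  plinks : ppath -> seq link;
  wlam : wpath -> wavelength;
  plam : ppath -> wavelength }.

Section RWAP.
Variable I : rwap.

(* s is a (simple) directed path from a to b: a nonempty sequence of links
   e_1 ... e_n with tail e_1 = a, head e_i = tail e_{i+1}, head e_n = b,
   visiting pairwise distinct vertices. *)
Definition is_dipath (a b : vert I) (s : seq (link I)) : bool :=
  [&& s != [::],
      a :: map (@lhead I) s == rcons (map (@ltail I) s) b &
      uniq (a :: map (@lhead I) s)].

Definition wE (w : wpath I) : {set link I} := [set e in wlinks w].
Definition pE (p : ppath I) : {set link I} := [set e in plinks p].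
Definition Bw (w : wpath I) : nat := #|wE w|.
Definition Bp (p : ppath I) : nat := #|pE p|.

Definition wf_rwap : Prop :=
  [/\ forall r : request I, src r != dst r,
      forall r : request I, exists w : wpath I, wreq w = r,
      forall r : request I, exists p : ppath I, preq p = r,
      forall w : wpath I, is_dipath (src (wreq w)) (dst (wreq w)) (wlinks w) &
      forall p : ppath I, is_dipath (src (preq p)) (dst (preq p)) (plinks p)] /\
  [/\
      (* W^r and P^r are sets: distinct indices of a request are distinct lightpaths *)
      forall w1 w2 : wpath I, wreq w1 = wreq w2 -> wlinks w1 = wlinks w2 ->
        wlam w1 = wlam w2 -> w1 = w2 &
      forall p1 p2 : ppath I, preq p1 = preq p2 -> plinks p1 = plinks p2 ->
        plam p1 = plam p2 -> p1 = p2].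

Definition C1 (w : wpath I) (p : ppath I) : bool :=
  (wreq w == preq p) && (wE w :&: pE p != set0).
Definition C2 (w : wpath I) (p : ppath I) : bool :=
  [&& wreq w != preq p, wlam w == plam p & wE w :&: pE p != set0].
Definition C3 (w1 w2 : wpath I) : bool :=
  [&& w1 != w2, wlam w1 == wlam w2 & wE w1 :&: wE w2 != set0].
Definition C4 (p1 p2 : ppath I) : bool :=
  [&& p1 != p2, plam p1 == plam p2 & pE p1 :&: pE p2 != set0].

Definition Xsum (x : wpath I -> bool) (r : request I) : nat :=
  (\sum_(w | wreq w == r) x w)%N.
Definition Ysum (y : ppath I -> bool) (r : request I) : nat :=
  (\sum_(p | preq p == r) y p)%N.

Definition feasible (x : wpath I -> bool) (y : ppath I -> bool) : Prop :=
  [/\ forall r, Xsum x r = Ysum y r &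
      forall r, Xsum x r <= 1] /\
  [/\
      forall w p, C1 w p -> x w + y p <= 1,
      forall w p, C2 w p -> x w + y p <= 1,
      forall w1 w2, C3 w1 w2 -> x w1 + x w2 <= 1 &
      forall p1 p2, C4 p1 p2 -> y p1 + y p2 <= 1].

Definition Mmax : nat :=
  \max_(r : request I)
     (\max_(w | wreq w == r) Bw w + \max_(p | preq p == r) Bp p)%N.

(* minimum lengths; the default #|link I| bounds every B, so for nonempty
   W^r, P^r these are the true minima *)
Definition Bwmin (r : request I) : nat :=
  \big[minn/#|link I|]_(w | wreq w == r) Bw w.
Definition Bpmin (r : request I) : nat :=
  \big[minn/#|link I|]_(p | preq p == r) Bp p.

Local Open Scope ring_scope.

Definition fobj (R : realFieldType) (alpha beta : R)
    (x : wpath I -> bool) (y : ppath I -> bool) : R :=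
  alpha * (\sum_(r : request I)
             ((\sum_(w | wreq w == r) Bw w * x w)%N
              + (\sum_(p | preq p == r) Bp p * y p)%N)%:R)
  - beta * (\sum_(r : request I) (Xsum x r)%:R).

Definition Qobj (R : realFieldType) (alpha beta rho : R)
    (x : wpath I -> bool) (y : ppath I -> bool) : R :=
  fobj alpha beta x y
  + rho * (\sum_(r : request I) ((Xsum x r)%:R - (Ysum y r)%:R) ^+ 2)
  + rho * (\sum_(r : request I) ((Xsum x r)%:R - 1) * (Xsum x r)%:R)
  + rho * (\sum_(w : wpath I) \sum_(p : ppath I | C1 w p) (x w)%:R * (y p)%:R)
  + rho * (\sum_(w : wpath I) \sum_(p : ppath I | C2 w p) (x w)%:R * (y p)%:R)
  + rho * (\sum_(w1 : wpath I) \sum_(w2 : wpath I | C3 w1 w2)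
             (x w1)%:R * (x w2)%:R)
  + rho * (\sum_(p1 : ppath I) \sum_(p2 : ppath I | C4 p1 p2)
             (y p1)%:R * (y p2)%:R).

End RWAP.

From HB Require Import structures.
From mathcomp Require Import all_boot all_order all_algebra.
From mathcomp Require Import ring lra.
Import Order.TTheory GRing.Theory Num.Theory.
Set Implicit Arguments. Unset Strict Implicit. Unset Printing Implicit Defensive.
Local Open Scope ring_scope.

(* A minimizer (x, y) of Q satisfies Q(x, y) <= Q(0, 0) = f(0, 0) = 0, and Q = f
   on feasible solutions, so it suffices that Q > 0 at every infeasible solution.
   Let X_r, Y_r count the working and protection lightpaths chosen for r and let
   m_r, n_r be their minimal lengths.  Bounding each chosen length below by the
   minimum, Q(x, y) is at least
     sum_r h_r(X_r, Y_r) + rho * (number of violated conflict pairs),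
     h_r(a, b) = alpha (a m_r + b n_r) - beta a + rho ((a - b)^2 + (a - 1) a).
   Since beta > alpha M >= alpha (m_r + n_r), every h_r(a, b) is at least
   alpha (m_r + n_r) - beta, and at least rho + alpha m_r - beta unless (a, b) is
   (0, 0) or (1, 1).  Summing over r, the lower bound on rho makes Q positive as
   soon as one request constraint or one conflict constraint is violated. *)

Lemma sqr_natrB_ge1 (R : realDomainType) (a b : nat) :
  a != b -> 1 <= (a%:R - b%:R) ^+ 2 :> R.
Proof.
case: ltngtP => // [lt_ab | lt_ba] _.
  by rewrite -sqrrN opprB -natrB ?(ltnW lt_ab) // exprn_ege1 // ler1n subn_gt0.
by rewrite -natrB ?(ltnW lt_ba) // exprn_ege1 // ler1n subn_gt0.
Qed.

Lemma bigmin_mul_sum_leq (T : finType) (P : pred T) (F : T -> nat) (d : nat)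
    (c : T -> nat) :
  (\big[minn/d]_(i | P i) F i * \sum_(i | P i) c i <= \sum_(i | P i) F i * c i)%N.
Proof.
rewrite big_distrr leq_sum // => i Pi.
by rewrite leq_mul // -minEnat -leEnat bigmin_le_cond.
Qed.

Section PairCount.
Variables (R : numDomainType) (A B : finType) (P : A -> B -> bool).
Variables (f : A -> bool) (g : B -> bool).

Definition pair_count : R := \sum_a \sum_(b | P a b) (f a)%:R * (g b)%:R.

Lemma pair_count_ge0 : 0 <= pair_count.
Proof. by rewrite sumr_ge0 // => a _; rewrite sumr_ge0 // => b _; rewrite mulr_ge0. Qed.

Lemma pair_count_ge1 a b : P a b -> f a -> g b -> 1 <= pair_count.
Proof.
move=> Pab fa gb; rewrite /pair_count (bigD1 a) //= (bigD1 b) //= fa gb mulr1.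
rewrite -addrA lerDl addr_ge0 ?sumr_ge0 // => [b' _ | a' _].
  by rewrite mulr_ge0.
by rewrite sumr_ge0 // => b' _; rewrite mulr_ge0.
Qed.

Lemma pair_count_lt1 a b : pair_count < 1 -> P a b -> (f a + g b <= 1)%N.
Proof.
move=> count_lt1 Pab; case fa: (f a); case gb: (g b) => //.
by have := lt_le_trans count_lt1 (pair_count_ge1 Pab fa gb); rewrite ltxx.
Qed.

Lemma pair_count_eq0 : (forall a b, P a b -> f a + g b <= 1)%N -> pair_count = 0.
Proof.
move=> disjoint; rewrite /pair_count big1 // => a _; rewrite big1 // => b Pab.
by case: (f a) (g b) (disjoint a b Pab) => [] [] //= _; rewrite ?mul0r ?mulr0.
Qed.

End PairCount.

Section RequestCost.
Variables (R : realFieldType) (alpha beta rho m n : R).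

Definition request_cost (a b : nat) : R :=
  alpha * (a%:R * m + b%:R * n) - beta * a%:R
  + rho * ((a%:R - b%:R) ^+ 2 + (a%:R - 1) * a%:R).

Lemma request_cost_infeasible (a b : nat) :
    0 <= alpha -> 0 <= n -> 0 <= rho ->
    alpha * (m + n) <= beta -> beta - alpha * m <= rho ->
  ~~ ((a == b) && (a <= 1)%N) -> rho + alpha * m - beta <= request_cost a b.
Proof.
move=> alpha_ge0 n_ge0 rho_ge0 cost_le_reward rho_ge_reward infeasible_ab.
have alpha_n_ge0 : 0 <= alpha * n by rewrite mulr_ge0.
have alpha_bn_ge0 : 0 <= alpha * (b%:R * n) by rewrite !mulr_ge0.
rewrite /request_cost; have [a0 | a_gt0] := posnP a.
  move: infeasible_ab; rewrite a0 andbT => /(sqr_natrB_ge1 R) /(ler_wpM2l rho_ge0).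
  by rewrite mulr0n => rho_le; lra.
have sqr_ge1 : 1 <= (a%:R - b%:R) ^+ 2 + (a%:R - 1) ^+ 2 :> R.
  have [eq_ab | /(sqr_natrB_ge1 R) ab_ge1] := eqVneq a b; last first.
    by have a1_ge0 := sqr_ge0 (a%:R - 1 : R); lra.
  move: infeasible_ab; rewrite eq_ab eqxx -ltnNge => /gtn_eqF /negbT.
  by move/(sqr_natrB_ge1 R); rewrite mulr1n subrr expr0n /= => a1_ge1; lra.
(* The excess over the bound is
   (a - 1) (rho + alpha m - beta) + alpha b n + rho ((a - b)^2 + (a - 1)^2 - 1). *)
have a1_ge0 : 0 <= a%:R - 1 :> R by rewrite subr_ge0 ler1n.
have bound_ge0 : 0 <= rho + alpha * m - beta by lra.
have := mulr_ge0 a1_ge0 bound_ge0; have := ler_wpM2l rho_ge0 sqr_ge1.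
lra.
Qed.

Lemma request_cost_ge (a b : nat) :
    0 <= alpha -> 0 <= n -> 0 <= rho ->
    alpha * (m + n) <= beta -> beta - alpha * m <= rho ->
  alpha * (m + n) - beta <= request_cost a b.
Proof.
move=> alpha_ge0 n_ge0 rho_ge0 cost_le_reward rho_ge_reward.
have [/andP[/eqP <-]|] := boolP ((a == b) && (a <= 1)%N).
  by case: a => [|[|]] // _; rewrite /request_cost; lra.
move/(request_cost_infeasible alpha_ge0 n_ge0 rho_ge0 cost_le_reward rho_ge_reward).
have : 0 <= alpha * n by rewrite mulr_ge0.
lra.
Qed.

End RequestCost.

Section LightpathLengths.
Variable I : rwap.

Lemma dipath_card_gt0 (a b : vert I) (s : seq (link I)) :
  is_dipath a b s -> (0 < #|[set e in s]|)%N.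
Proof.
by case/and3P; case: s => // e s _ _ _; apply/card_gt0P; exists e; rewrite inE mem_head.
Qed.

Lemma Bwmin_le (w : wpath I) : (Bwmin (wreq w) <= Bw w)%N.
Proof. by rewrite /Bwmin -minEnat -leEnat bigmin_le_cond. Qed.

Lemma Bpmin_le (p : ppath I) : (Bpmin (preq p) <= Bp p)%N.
Proof. by rewrite /Bpmin -minEnat -leEnat bigmin_le_cond. Qed.

Hypothesis wfI : wf_rwap I.

Lemma Bw_gt0 (w : wpath I) : (0 < Bw w)%N.
Proof. by case: wfI => [[_ _ _ dipath_w _] _]; apply: dipath_card_gt0 (dipath_w w). Qed.

Lemma Bp_gt0 (p : ppath I) : (0 < Bp p)%N.
Proof. by case: wfI => [[_ _ _ _ dipath_p] _]; apply: dipath_card_gt0 (dipath_p p). Qed.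

Lemma Bwmin_gt0 (r : request I) : (0 < Bwmin r)%N.
Proof.
case: wfI => [[_ hasW _ _ _] _]; have [w <-] := hasW r.
rewrite /Bwmin -minEnat -leEnat le_bigmin // => [|v _]; last exact: Bw_gt0.
exact: leq_trans (Bw_gt0 w) (max_card _).
Qed.

Lemma Bpmin_gt0 (r : request I) : (0 < Bpmin r)%N.
Proof.
case: wfI => [[_ _ hasP _ _] _]; have [p <-] := hasP r.
rewrite /Bpmin -minEnat -leEnat le_bigmin // => [|v _]; last exact: Bp_gt0.
exact: leq_trans (Bp_gt0 p) (max_card _).
Qed.

Lemma Bmin_le_Mmax (r : request I) : (Bwmin r + Bpmin r <= Mmax I)%N.
Proof.
case: wfI => [[_ hasW hasP _ _] _]; have [w Ew] := hasW r; have [p Ep] := hasP r.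
apply: leq_trans (leq_bigmax r); apply: leq_add.
  by rewrite -{1}Ew (leq_trans (Bwmin_le w)) // leq_bigmax_cond ?Ew.
by rewrite -{1}Ep (leq_trans (Bpmin_le p)) // leq_bigmax_cond ?Ep.
Qed.

End LightpathLengths.

Lemma Bmin_cost_lt_beta (I : rwap) (R : realFieldType) (alpha beta : R) (r : request I) :
    wf_rwap I -> 0 < alpha ->
    #|request I|%:R * ((Mmax I)%:R - 2) + 2 < beta / alpha ->
  alpha * ((Bwmin r)%:R + (Bpmin r)%:R) < beta.
Proof.
move=> wfI alpha_gt0; rewrite ltr_pdivlMr // => threshold_lt.
have Bmin_le : (Bwmin r)%:R + (Bpmin r)%:R <= (Mmax I)%:R :> R.
  by rewrite -natrD ler_nat Bmin_le_Mmax.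
have M_ge2 : 2 <= (Mmax I)%:R :> R.
  rewrite (ler_nat R 2).
  exact: leq_trans (leq_add (Bwmin_gt0 wfI r) (Bpmin_gt0 wfI r)) (Bmin_le_Mmax wfI r).
have card_ge1 : 1 <= #|request I|%:R :> R by rewrite ler1n; apply/card_gt0P; exists r.
have : 0 <= (#|request I|%:R - 1) * ((Mmax I)%:R - 2) * alpha.
  by rewrite !mulr_ge0 ?subr_ge0 // ltW.
have := ler_wpM2l (ltW alpha_gt0) Bmin_le.
lra.
Qed.

Lemma Xsum0 (I : rwap) (r : request I) : Xsum (fun _ : wpath I => false) r = 0%N.
Proof. by rewrite /Xsum big1. Qed.

Lemma Ysum0 (I : rwap) (r : request I) : Ysum (fun _ : ppath I => false) r = 0%N.
Proof. by rewrite /Ysum big1. Qed.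

Lemma feasible0 (I : rwap) :
  feasible (fun _ : wpath I => false) (fun _ : ppath I => false).
Proof. by split; split=> // r; rewrite Xsum0 ?Ysum0. Qed.

Section PenalizedObjective.
Variables (I : rwap) (R : realFieldType) (alpha beta rho : R).
Implicit Types (x : wpath I -> bool) (y : ppath I -> bool) (r : request I).

Local Notation wmin r := ((Bwmin r)%:R : R).
Local Notation pmin r := ((Bpmin r)%:R : R).
Local Notation cost r := (request_cost alpha beta rho (wmin r) (pmin r)).

Definition conflicts x y : R :=
  pair_count R (@C1 I) x y + pair_count R (@C2 I) x y
  + pair_count R (@C3 I) x x + pair_count R (@C4 I) y y.

Lemma fobj0 : fobj alpha beta (fun _ : wpath I => false) (fun _ : ppath I => false) = 0.
Proof.
rewrite /fobj big1 => [|r _]; last by rewrite !big1 // => ? _; rewrite muln0.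
by rewrite big1 ?mulr0 ?subrr // => r _; rewrite Xsum0.
Qed.

Lemma Qobj_feasible x y : feasible x y -> Qobj alpha beta rho x y = fobj alpha beta x y.
Proof.
case=> [[XY X_le1] [c1 c2 c3 c4]].
have sqr0 : \sum_r ((Xsum x r)%:R - (Ysum y r)%:R) ^+ 2 = 0 :> R.
  by rewrite big1 // => r _; rewrite XY subrr expr0n.
have binom0 : \sum_r ((Xsum x r)%:R - 1) * (Xsum x r)%:R = 0 :> R.
  rewrite big1 // => r _.
  by case: (Xsum x r) (X_le1 r) => [|[|]] // _; rewrite ?mulr0 ?subrr ?mul0r.
move: (pair_count_eq0 R c1) (pair_count_eq0 R c2).
move: (pair_count_eq0 R c3) (pair_count_eq0 R c4).
by rewrite /Qobj /pair_count sqr0 binom0 => -> -> -> ->; rewrite !mulr0 !addr0.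
Qed.

Lemma fobj_ge_Bmin x y : 0 <= alpha ->
  alpha * \sum_r ((Xsum x r)%:R * wmin r + (Ysum y r)%:R * pmin r)
  - beta * \sum_r (Xsum x r)%:R <= fobj alpha beta x y.
Proof.
move=> alpha_ge0; rewrite /fobj lerD2r ler_wpM2l // ler_sum // => r _.
by rewrite -!natrM -natrD ler_nat leq_add // mulnC bigmin_mul_sum_leq.
Qed.

Lemma Qobj_ge_cost x y : 0 <= alpha ->
  \sum_r cost r (Xsum x r) (Ysum y r) + rho * conflicts x y <= Qobj alpha beta rho x y.
Proof.
move=> alpha_ge0.
have -> : \sum_r cost r (Xsum x r) (Ysum y r) =
    alpha * \sum_r ((Xsum x r)%:R * wmin r + (Ysum y r)%:R * pmin r)
    - beta * \sum_r (Xsum x r)%:R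
    + rho * \sum_r ((Xsum x r)%:R - (Ysum y r)%:R) ^+ 2
    + rho * \sum_r ((Xsum x r)%:R - 1) * (Xsum x r)%:R.
  rewrite !mulr_sumr -sumrB -!big_split; apply: eq_bigr => r _.
  by rewrite /request_cost /=; ring.
have := fobj_ge_Bmin x y alpha_ge0.
rewrite /Qobj /conflicts /pair_count; lra.
Qed.

Lemma conflicts_ge0 x y : 0 <= conflicts x y.
Proof. by rewrite /conflicts !addr_ge0 ?pair_count_ge0. Qed.

Lemma conflicts_lt1_pairs x y : conflicts x y < 1 ->
  [/\ forall w p, C1 w p -> (x w + y p <= 1)%N,
       forall w p, C2 w p -> (x w + y p <= 1)%N,
       forall w1 w2, C3 w1 w2 -> (x w1 + x w2 <= 1)%N &
       forall p1 p2, C4 p1 p2 -> (y p1 + y p2 <= 1)%N].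
Proof.
rewrite /conflicts => conflicts_lt1.
have := pair_count_ge0 R (@C1 I) x y; have := pair_count_ge0 R (@C2 I) x y.
have := pair_count_ge0 R (@C3 I) x x; have := pair_count_ge0 R (@C4 I) y y.
by move=> *; split=> a b; apply: (pair_count_lt1 (R := R)); lra.
Qed.

Local Notation shortest_cost r := (alpha * (wmin r + pmin r) - beta).

Hypotheses (wfI : wf_rwap I) (alpha_gt0 : 0 < alpha) (rho_ge0 : 0 <= rho).
Hypothesis Bmin_cost_lt : forall r, alpha * (wmin r + pmin r) < beta.
Hypothesis rho_slack : beta - alpha < \sum_(r : request I) shortest_cost r + rho.

Lemma alpha_pmin_lt_beta r : alpha * (1 + pmin r) < beta.
Proof.
have wmin_ge1 : 1 <= wmin r by rewrite ler1n Bwmin_gt0.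
have := ler_wpM2l (ltW alpha_gt0) wmin_ge1; have := Bmin_cost_lt r.
lra.
Qed.

Lemma rho_ge_reward r : beta - alpha * wmin r <= rho.
Proof.
have sum_le : \sum_(s : request I) shortest_cost s <= shortest_cost r.
  rewrite (bigD1 r) //= gerDl sumr_le0 // => s _.
  by rewrite subr_le0 ltW.
have := alpha_pmin_lt_beta r; have := rho_slack.
lra.
Qed.

Lemma shortest_cost_le_request_cost r a b : shortest_cost r <= cost r a b.
Proof.
exact: request_cost_ge (ltW alpha_gt0) (ler0n _ _) rho_ge0 (ltW (Bmin_cost_lt r))
  (rho_ge_reward r).
Qed.

Lemma sum_cost_ge_infeasible x y r :
    ~~ ((Xsum x r == Ysum y r) && (Xsum x r <= 1)%N) ->
  \sum_(s : request I) shortest_cost s + rho - alpha * pmin r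
    <= \sum_s cost s (Xsum x s) (Ysum y s).
Proof.
move=> /(request_cost_infeasible (ltW alpha_gt0) (ler0n _ _) rho_ge0
  (ltW (Bmin_cost_lt r)) (rho_ge_reward r)) cost_r_ge.
have others : \sum_(s : request I | s != r) shortest_cost s
              <= \sum_(s | s != r) cost s (Xsum x s) (Ysum y s).
  by apply: ler_sum => s _; apply: shortest_cost_le_request_cost.
rewrite (bigD1 r) //= [leRHS](bigD1 r) //=.
lra.
Qed.

Lemma Qobj_gt0_of_infeasible x y r :
  ~~ ((Xsum x r == Ysum y r) && (Xsum x r <= 1)%N) -> 0 < Qobj alpha beta rho x y.
Proof.
move/sum_cost_ge_infeasible => cost_ge.
have := Qobj_ge_cost x y (ltW alpha_gt0); have := mulr_ge0 rho_ge0 (conflicts_ge0 x y).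
have := alpha_pmin_lt_beta r; have := rho_slack.
lra.
Qed.

(* [r] only witnesses that there is a request, which is what gives [alpha < beta]. *)
Lemma Qobj_le0_conflicts_lt1 x y r : Qobj alpha beta rho x y <= 0 -> conflicts x y < 1.
Proof.
move=> Q_le0; rewrite ltNge; apply/negP => /(ler_wpM2l rho_ge0) rho_le.
have cost_ge : \sum_(s : request I) shortest_cost s
                <= \sum_s cost s (Xsum x s) (Ysum y s).
  by apply: ler_sum => s _; apply: shortest_cost_le_request_cost.
have := Qobj_ge_cost x y (ltW alpha_gt0); have := alpha_pmin_lt_beta r.
have := mulr_ge0 (ltW alpha_gt0) (ler0n R (Bpmin r)); have := rho_slack.
lra.
Qed.

Lemma Qobj_le0_feasible x y : Qobj alpha beta rho x y <= 0 -> feasible x y.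
Proof.
move=> Q_le0.
have served r : (Xsum x r == Ysum y r) && (Xsum x r <= 1)%N.
  by apply: contraTT Q_le0 => /Qobj_gt0_of_infeasible; rewrite -ltNge.
have pairs_ok r := conflicts_lt1_pairs (Qobj_le0_conflicts_lt1 r Q_le0).
split; [split=> r | split=> [w p | w p | w1 w2 | p1 p2]].
- by case/andP: (served r) => /eqP.
- by case/andP: (served r).
- by have [ok _ _ _] := pairs_ok (wreq w); apply: ok.
- by have [_ ok _ _] := pairs_ok (wreq w); apply: ok.
- by have [_ _ ok _] := pairs_ok (wreq w1); apply: ok.
- by have [_ _ _ ok] := pairs_ok (preq p1); apply: ok.
Qed.

End PenalizedObjective.

Lemma rho_bound_slack (I : rwap) (R : realFieldType) (alpha beta rho : R) :
    beta * (#|request I|%:R + 1)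
    - alpha * (1 + \sum_(r : request I) ((Bwmin r)%:R + (Bpmin r)%:R)) < rho ->
  beta - alpha < \sum_(r : request I) (alpha * ((Bwmin r)%:R + (Bpmin r)%:R) - beta) + rho.
Proof. by rewrite sumrB -mulr_sumr sumr_const -mulr_natr; lra. Qed.

Theorem proposition4 (I : rwap) (R : realFieldType) (alpha beta rho : R) :
  wf_rwap I ->
  0 < alpha -> 0 < beta ->
  beta / alpha > (#|request I|%:R * ((Mmax I)%:R - 2) + 2) ->
  rho > beta * (#|request I|%:R + 1)
        - alpha * (1 + \sum_(r : request I) ((Bwmin r)%:R + (Bpmin r)%:R)) ->
  0 < rho ->
  forall (x : wpath I -> bool) (y : ppath I -> bool),
    (forall (x' : wpath I -> bool) (y' : ppath I -> bool),
        Qobj alpha beta rho x y <= Qobj alpha beta rho x' y') ->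
    feasible x y /\
    (forall (x' : wpath I -> bool) (y' : ppath I -> bool),
        feasible x' y' -> fobj alpha beta x y <= fobj alpha beta x' y').
Proof.
move=> wfI alpha_gt0 _ threshold_lt rho_gt rho_gt0 x y Qmin.
have cost_lt r := Bmin_cost_lt_beta r wfI alpha_gt0 threshold_lt.
have Q_le0 : Qobj alpha beta rho x y <= 0.
  rewrite -(fobj0 I alpha beta) -(Qobj_feasible alpha beta rho (feasible0 I)).
  exact: Qmin.
have feas := Qobj_le0_feasible wfI alpha_gt0 (ltW rho_gt0) cost_lt
  (rho_bound_slack rho_gt) Q_le0.
split=> // x' y' feas'.
rewrite -(Qobj_feasible alpha beta rho feas) -(Qobj_feasible alpha beta rho feas').
exact: Qmin.
Qed.
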